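(* Let $0<\alpha<\infty$ and define $\chi_\alpha(s)=\mu(Fix(s))^\alpha$ for $s\in S(2^\infty)$. If $\chi_\alpha$ is a character on $S(2^\infty)$, then $\alpha\in\mathbb{N}$.
   Context: Let $X=\{0,1\}^{\mathbb{N}}$ with product measure $\mu=\nu^{\otimes\infty}$, $\nu(\{0\})=\nu(\{1\})=1/2$; $X_n=\{0,1\}^n$; $S(2^n)$ the group of all bijections of $X_n$, acting on $X$ by $s((x,a))=(s(x),a)$ for $x\in X_n$, $a\in X$; $S(2^\infty)=\bigcup_n S(2^n)$; $Fix(s)=\{x\in X:s(x)=x\}$. A character on a group $G$ is a function $\chi:G\to\mathbb{C}$ with $\chi(g_1g_2)=\chi(g_2g_1)$ for all $g_1,g_2$, $(\chi(g_ig_j^{-1}))_{i,j=1}^n$ positive semidefinite for all $n$ and $g_1,\dots,g_n$, and $\chi(e)=1$. *)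

From HB Require Import structures.
From mathcomp Require Import all_boot all_order all_algebra all_fingroup.
From mathcomp Require Import boolp classical_sets reals exp.
From mathcomp Require Import complex.

Set Implicit Arguments.
Unset Strict Implicit.
Unset Printing Implicit Defensive.

Import Order.TTheory GRing.Theory Num.Theory.
Local Open Scope classical_set_scope.
Local Open Scope ring_scope.

(* X = {0,1}^N, points are infinite binary sequences (0 = false, 1 = true). *)
Definition X := nat -> bool.

Definition prefix (n : nat) (w : X) : n.-tuple bool :=
  [tuple w (nat_of_ord i) | i < n].

Definition ext (n : nat) (t : n.-tuple bool) : X := fun i => nth false t i.

(* action of s in S(2^n) = {perm X_n} on X :  s((x,a)) = (s(x), a) *)
Definition act (n : nat) (s : {perm (n.-tuple bool)}) : X -> X :=
  fun w i => if (i < n)%N then nth false (s (prefix n w)) i else w i.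

(* S(2^infty) = union of the S(2^n), as a group of bijections of X under
   composition *)
Definition S2inf : set (X -> X) :=
  [set g | exists (n : nat) (s : {perm (n.-tuple bool)}), g = act s].

Definition Fix (g : X -> X) : set X := [set w | g w = w].

(* The Bernoulli(1/2) product measure mu on cylinder sets.
   A is an n-cylinder if membership in A only depends on the first n
   coordinates; then mu(A) = #{t in X_n | t x X subset A} / 2^n. *)
Definition cyl_at (n : nat) (A : set X) : Prop :=
  forall w w', prefix n w = prefix n w' -> (A w <-> A w').

Definition cyl_mass {R : realType} (n : nat) (A : set X) : R :=
  (#|[set t : n.-tuple bool | `[< A (ext t) >] ]|%:R / 2 ^+ n).

Definition cyl_level (A : set X) : nat := xget 0%N [set n | cyl_at n A].

(* mu(A) for a cylinder set A (the value for non-cylinder sets is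
   irrelevant: mu is only ever applied to sets Fix(s), s in S(2^infty),
   which are cylinder sets). *)
Definition mu {R : realType} (A : set X) : R := cyl_mass (cyl_level A) A.

Definition chi_alpha {R : realType} (alpha : R) (g : X -> X) : R[i] :=
  ((mu (Fix g)) `^ alpha)%:C%C.

(* A character on the group S(2^infty) (elements are bijections of X,
   product is composition, h is the inverse of g iff g \o h = h \o g = id). *)
Definition is_character {R : realType} (chi : (X -> X) -> R[i]) : Prop :=
  [/\ (forall g1 g2, S2inf g1 -> S2inf g2 -> chi (g1 \o g2) = chi (g2 \o g1)),
      (forall (N : nat) (g ginv : 'I_N -> (X -> X)),
          (forall i, [/\ S2inf (g i), S2inf (ginv i),
                        g i \o ginv i = id & ginv i \o g i = id]) ->
          forall c : 'I_N -> R[i],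
            0 <= \sum_(i < N) \sum_(j < N)
                   (c i)^* * chi (g i \o ginv j) * c j)
    & chi id = 1].

(* For C a subset of {0,...,m-1}, let sigma_C in S(2^(m+1)) flip the last bit
   of a word exactly when its first m bits form a unit vector e_i with i in C.
   Then sigma_A sigma_B = sigma_(A Δ B) and mu(Fix sigma_C) = 1 - |C| / 2^m, so
   testing positive-definiteness of chi_alpha on these involutions against the
   signs (-1)^|C| gives
     sum_k (-1)^k binom(m, k) (1 - k / 2^m)^alpha >= 0.
   The left-hand side is the m-th iterate of f |-> f(x) - f(x + 1) applied to
   f(x) = (1 - x / 2^m)^alpha at 0; by the mean value theorem it has the sign
   of alpha (alpha - 1) ... (alpha - m + 1), which is negative for
   m = floor(alpha) + 2 when alpha is not an integer. *)

From Pilot Require Import Defs.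
From HB Require Import structures.
From mathcomp Require Import all_boot all_order all_algebra all_fingroup.
From mathcomp Require Import boolp classical_sets reals topology normedtype.
From mathcomp Require Import derive realfun exp complex ring.
(* [prefix] must denote Defs.prefix, not seq.prefix. *)
Import Pilot.Defs.
Import Order.TTheory GRing.Theory Num.Theory numFieldNormedType.Exports.
Local Open Scope ring_scope.

Section FiniteDifferences.
Variable R : realType.
Local Open Scope classical_set_scope.

Lemma is_derive_affine (f : R -> R) (a b x df : R) :
  is_derive (a * x + b) 1 f df -> is_derive x 1 (fun y => f (a * y + b)) (df * a).
Proof.
move=> fdf; apply: (@is_derive1_comp _ f (fun y => a * y + b)) => //.
have := is_deriveD (is_deriveZ a (@is_derive_id _ _ x 1)) (@is_derive_cst _ _ _ b x 1).
by rewrite /GRing.scale /= mulr1 addr0.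
Qed.

Definition diff1 (f : R -> R) (x : R) : R := f x - f (x + 1).

Definition diffn (n : nat) (f : R -> R) : R -> R := iter n diff1 f.

Lemma is_derive_diff1 (f : R -> R) (x df df1 : R) :
  is_derive x 1 f df -> is_derive (x + 1) 1 f df1 ->
  is_derive x 1 (diff1 f) (df - df1).
Proof.
move=> fdf fdf1; have := is_deriveB fdf (@is_derive_affine f 1 1 x df1 _).
by rewrite mul1r mulr1 => /(_ fdf1); under eq_fun do rewrite mul1r.
Qed.

Lemma diff1_lt0 (f g : R -> R) (x : R) :
  (forall y, x <= y <= x + 1 -> is_derive y 1 f (- g y)) ->
  (forall y, x < y < x + 1 -> g y < 0) -> diff1 f x < 0.
Proof.
move=> fdg g_neg; have x_lt : x < x + 1 by rewrite ltrDl.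
have f_cont : {within `[x, x + 1], continuous f}.
  apply: derivable_within_continuous => y; rewrite in_itv /= => /fdg.
  by case.
have fdg_open y : y \in `]x, x + 1[%R -> is_derive y 1 f (- g y).
  by rewrite in_itv /= => /andP[xy yx]; apply: fdg; rewrite !ltW.
have [c] := MVT x_lt fdg_open f_cont.
rewrite in_itv /= => /g_neg gc_neg f_incr.
by rewrite /diff1 subr_lt0 -subr_gt0 f_incr addrAC subrr add0r mulr1 oppr_gt0.
Qed.

(* Iterated mean value theorem: [G i] stands for (-1)^i times the i-th
   derivative of [G 0]. *)
Lemma diffn_lt0 (m : nat) (G : nat -> R -> R) (L : R) : m%:R < L ->
  (forall i x, (i < m)%N -> x < L -> is_derive x 1 (G i) (- G i.+1 x)) ->
  (forall x, x < L -> G m x < 0) -> diffn m (G 0%N) 0 < 0.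
Proof.
elim: m G L => [|m IHm] G L mL Gder Gm_neg; first exact: Gm_neg.
rewrite /diffn iterSr; apply: (IHm (fun i => diff1 (G i)) (L - 1)).
- by rewrite ltrBrDr natr1.
- move=> i x im xL; have x1L : x + 1 < L by rewrite -ltrBrDr.
  have xL' : x < L by apply: lt_trans x1L; rewrite ltrDl.
  have := @is_derive_diff1 _ _ _ _ (Gder _ _ (ltnW im) xL') (Gder _ _ (ltnW im) x1L).
  move=> /is_derive_eq; apply.
  by rewrite /diff1 opprB addrC opprK.
- move=> x x1L; have xL : x + 1 < L by rewrite -ltrBrDr.
  apply: (@diff1_lt0 (G m) (G m.+1)) => [y /andP[_ yx]|y /andP[_ yx]].
    by apply: Gder => //; apply: le_lt_trans xL.
  by apply: Gm_neg; apply: lt_trans xL.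
Qed.

Definition alt_binom_sum (m : nat) (f : R -> R) : R :=
  \sum_(k < m.+1) 'C(m, k)%:R * (-1) ^+ k * f k%:R.

Lemma alt_binom_sumS (m : nat) (f : R -> R) :
  alt_binom_sum m.+1 f = alt_binom_sum m (diff1 f).
Proof.
pose g k : R := (-1) ^+ k * f k%:R.
have splitC k : 'C(m, k)%:R * (-1) ^+ k * diff1 f k%:R =
    'C(m, k)%:R * g k + 'C(m, k)%:R * g k.+1.
  by rewrite /g /diff1 exprS -natr1; ring.
rewrite /alt_binom_sum; under [RHS]eq_bigr do rewrite splitC.
rewrite big_split /= big_ord_recl bin0 /=.
under eq_bigr do rewrite binS natrD mulrDl mulrDl.
rewrite big_split /= [X in _ = X + _]big_ord_recl bin0 /=.
rewrite [X in _ + (X + _) = _]big_ord_recr /= bin_small // !mul0r addr0.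
rewrite /g /bump /= -!addrA; congr (_ + (_ + _)); first ring.
  by apply: eq_bigr => i _; rewrite mulrA.
by apply: eq_bigr => i _; rewrite mulrA.
Qed.

Lemma alt_binom_sum_diffn (m : nat) (f : R -> R) :
  alt_binom_sum m f = diffn m f 0.
Proof.
elim: m f => [|m IHm] f.
  by rewrite /alt_binom_sum big_ord_recl big_ord0 bin0 expr0 !mul1r addr0.
by rewrite alt_binom_sumS IHm /diffn iterSr.
Qed.

Definition falling (a : R) (i : nat) : R := \prod_(j < i) (a - j%:R).

Lemma falling_lt0 (a : R) (k : nat) :
  k%:R < a -> a < k.+1%:R -> falling a k.+2 < 0.
Proof.
move=> ka ak; rewrite /falling big_ord_recr /= pmulr_rlt0 ?subr_lt0 //.
apply: prodr_gt0 => j _; rewrite subr_gt0; apply: le_lt_trans ka.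
by rewrite ler_nat -ltnS.
Qed.

Lemma alt_binom_sum_powR_lt0 (a e : R) (m : nat) :
  0 < e -> m%:R < e^-1 -> falling a m < 0 ->
  alt_binom_sum m (fun x => (1 - e * x) `^ a) < 0.
Proof.
move=> e_gt0 me fall_neg; rewrite alt_binom_sum_diffn.
pose G i x := e ^+ i * falling a i * (- e * x + 1) `^ (a - i%:R).
have base_gt0 x : x < e^-1 -> 0 < - e * x + 1.
  by rewrite mulNr addrC subr_gt0 mulrC -ltr_pdivlMr // mul1r.
have -> : (fun x => (1 - e * x) `^ a) = G 0%N.
  by apply/funext => x; rewrite /G /falling big_ord0 !mul1r subr0 addrC mulNr.
apply: (@diffn_lt0 m G _ me) => [i x _ /base_gt0 x_pos|x /base_gt0 x_pos].
  have := is_deriveZ (e ^+ i * falling a i)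
    (@is_derive_affine _ _ _ _ _ (is_derive1_powR (a - i%:R) x_pos)).
  move=> /is_derive_eq; apply.
  rewrite /G /falling big_ord_recr /= exprS -natr1 opprD addrA /GRing.scale /=.
  ring.
by rewrite /G pmulr_llt0 ?powR_gt0 // pmulr_rlt0 // exprn_gt0.
Qed.

End FiniteDifferences.

Arguments alt_binom_sum {R}.

Lemma nth_prefix (n i : nat) (w : X) : (i < n)%N -> nth false (prefix n w) i = w i.
Proof.
move=> lt_in; have -> : nth false (prefix n w) i = tnth (prefix n w) (Ordinal lt_in).
  by rewrite (tnth_nth false).
by rewrite tnth_mktuple.
Qed.

Lemma prefix_ext (n : nat) (t : n.-tuple bool) : prefix n (ext t) = t.
Proof. by apply: eq_from_tnth => i; rewrite tnth_mktuple (tnth_nth false). Qed.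

Lemma prefix_act (n : nat) (s : {perm n.-tuple bool}) (w : X) :
  prefix n (act s w) = s (prefix n w).
Proof.
by apply: eq_from_tnth => i; rewrite tnth_mktuple /act ltn_ord (tnth_nth false).
Qed.

Lemma act_comp (n : nat) (s t : {perm n.-tuple bool}) : act s \o act t = act (t * s)%g.
Proof.
apply/funext => w; apply/funext => i.
by rewrite /act /= prefix_act permM; case: (i < n)%N.
Qed.

Lemma act1 (n : nat) : act (1%g : {perm n.-tuple bool}) = id.
Proof.
by apply/funext => w; apply/funext => i; rewrite /act perm1; case: ifP => // /nth_prefix.
Qed.

Lemma Fix_act (n : nat) (s : {perm n.-tuple bool}) (w : X) :
  Fix (act s) w <-> s (prefix n w) = prefix n w.
Proof.
split=> [fix_w | s_fix]; first by rewrite -prefix_act fix_w.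
by apply/funext => i; rewrite /act s_fix; case: ifP => // /nth_prefix.
Qed.

Section RconsPair.
Variable n : nat.

Definition rcons_pair (x : n.-tuple bool * bool) : n.+1.-tuple bool :=
  [tuple of rcons x.1 x.2].

Definition unrcons (t : n.+1.-tuple bool) : n.-tuple bool * bool :=
  ([tuple tnth t (widen_ord (leqnSn n) i) | i < n], tnth t ord_max).

Lemma rcons_pairK : cancel rcons_pair unrcons.
Proof.
move=> [u b]; congr (_, _); last first.
  by rewrite (tnth_nth false) /= nth_rcons size_tuple ltnn eqxx.
apply: eq_from_tnth => i; rewrite tnth_mktuple !(tnth_nth false) /=.
by rewrite nth_rcons size_tuple ltn_ord.
Qed.

Lemma unrconsK : cancel unrcons rcons_pair.
Proof.
have /inj_card_bij[| g rK gK] := can_inj rcons_pairK.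
  by rewrite card_prod !card_tuple card_bool expnS mulnC.
by move=> t; rewrite -(gK t) rcons_pairK.
Qed.

Lemma card_rcons_pair_preim (P : pred (n.-tuple bool)) (Q : pred (n.+1.-tuple bool)) :
  (forall u b, Q (rcons_pair (u, b)) = P u) ->
  #|[set t | Q t]| = (#|[set u | P u]| * 2)%N.
Proof.
move=> QP; have -> : [set t | Q t] = rcons_pair @: finset.setX [set u | P u] [set: bool].
  apply/setP => t; rewrite -[t]unrconsK (mem_imset _ _ (can_inj rcons_pairK)).
  by case: (unrcons t) => u b; rewrite !inE QP andbT.
by rewrite (card_imset _ (can_inj rcons_pairK)) cardsX cardsT card_bool.
Qed.

Lemma prefix_rcons_pair (u : n.-tuple bool) (b : bool) :
  prefix n (ext (rcons_pair (u, b))) = u.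
Proof.
apply: eq_from_tnth => i.
by rewrite tnth_mktuple /ext /= nth_rcons size_tuple ltn_ord (tnth_nth false).
Qed.

End RconsPair.

Arguments rcons_pair {n}.
Arguments unrcons {n}.

Section CylinderMass.
Variable R : realType.

Lemma cyl_massE (n : nat) (A : set X) (P : pred (n.-tuple bool)) :
  (forall t, A (ext t) <-> P t) -> cyl_mass n A = #|[set t | P t]|%:R / 2 ^+ n :> R.
Proof.
move=> AP; rewrite /cyl_mass; congr (_%:R / _); apply: eq_card => t.
rewrite inE; apply/idP/idP => [|/(AP t) At]; rewrite in_setE /=.
  by move=> /asboolP/(AP t).
exact/asboolP.
Qed.

Lemma cyl_at_leq (k l : nat) (A : set X) : (k <= l)%N -> cyl_at k A -> cyl_at l A.
Proof.
move=> kl Ak w w' eq_l; apply: Ak; apply: eq_from_tnth => i.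
have := congr1 (fun t => tnth t (widen_ord kl i)) eq_l.
by rewrite !tnth_mktuple.
Qed.

Lemma cyl_massS (k : nat) (A : set X) :
  cyl_at k A -> cyl_mass k.+1 A = cyl_mass k A :> R.
Proof.
move=> Ak; pose P n (t : n.-tuple bool) := `[< A (ext t) >].
rewrite (@cyl_massE k.+1 A (P k.+1)); last by move=> t; rewrite asboolE.
rewrite (@cyl_massE k A (P k)); last by move=> t; rewrite asboolE.
rewrite (@card_rcons_pair_preim k (P k)); last first.
  by move=> u b; apply/asbool_equiv_eq/Ak; rewrite prefix_rcons_pair prefix_ext.
by rewrite natrM exprS; field; rewrite expf_neq0 // pnatr_eq0.
Qed.

Lemma mu_cyl (n : nat) (A : set X) : cyl_at n A -> mu A = cyl_mass n A :> R.
Proof.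
have cyl_massD k d : cyl_at k A -> cyl_mass (k + d) A = cyl_mass k A :> R.
  move=> Ak; elim: d => [|d IHd]; first by rewrite addn0.
  by rewrite addnS cyl_massS ?IHd //; apply: cyl_at_leq Ak; rewrite leq_addr.
move=> An; have Ak := @xgetPex _ 0%N [set n | cyl_at n A] (ex_intro _ n An).
by rewrite /mu -(cyl_massD _ n Ak) -(cyl_massD _ (cyl_level A) An) addnC.
Qed.

Lemma mu_Fix_act (n : nat) (s : {perm n.-tuple bool}) :
  mu (Fix (act s)) = #|[set t | s t == t]|%:R / 2 ^+ n :> R.
Proof.
rewrite (@mu_cyl n) => [|w w' eq_w]; last by rewrite !Fix_act eq_w.
by apply: cyl_massE => t; rewrite Fix_act prefix_ext; split => [->|/eqP].
Qed.

End CylinderMass.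

Section SymmetricDifference.
Context {T : finType}.
Implicit Types A B : {set T}.

Definition symdiff A B : {set T} := (A :\: B) :|: (B :\: A).

Lemma in_symdiff A B x : (x \in symdiff A B) = (x \in A) (+) (x \in B).
Proof. by rewrite !inE; case: (x \in A); case: (x \in B). Qed.

Lemma symdiffK A : involutive (symdiff A).
Proof. by move=> B; apply/setP => x; rewrite !in_symdiff addKb. Qed.

Lemma signr_card_symdiff (R : comPzRingType) A B :
  (-1 : R) ^+ #|A| * (-1) ^+ #|B| = (-1) ^+ #|symdiff A B|.
Proof.
have -> : #|symdiff A B| = (#|A :\: B| + #|B :\: A|)%N.
  rewrite cardsU (_ : _ :&: _ = finset.set0) ?cards0 ?subn0 //.
  by apply/setP => x; rewrite !inE; case: (x \in A); case: (x \in B).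
rewrite -(cardsID B A) -(cardsID A B) finset.setIC !exprD mulrACA.
by rewrite -exprMn mulrNN mulr1 expr1n mul1r.
Qed.

Lemma symdiffC : commutative symdiff.
Proof. by move=> A B; rewrite /symdiff finset.setUC. Qed.

End SymmetricDifference.

Lemma imset_symdiff (aT rT : finType) (f : aT -> rT) (A B : {set aT}) : injective f ->
  f @: symdiff A B = symdiff (f @: A) (f @: B).
Proof.
move=> f_inj; apply/setP => y; rewrite in_symdiff.
have [/imsetP[x _ ->] | y_notin] := boolP (y \in f @: [set: aT]).
  by rewrite !mem_imset // in_symdiff.
have notin (C : {set aT}) : (y \in f @: C) = false.
  by apply: contraNF y_notin => /imsetP[x _ ->]; rewrite imset_f ?finset.in_setT.
by rewrite !notin.
Qed.

Section FlipLast.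
Variable m : nat.
Implicit Types S : {set m.-tuple bool}.

Definition flip_last S (t : m.+1.-tuple bool) : m.+1.-tuple bool :=
  let: (u, b) := unrcons t in rcons_pair (u, b (+) (u \in S)).

Lemma flip_lastK S : involutive (flip_last S).
Proof.
move=> t; rewrite /flip_last; case def_t: (unrcons t) => [u b].
by rewrite rcons_pairK -addbA addbb addbF -def_t unrconsK.
Qed.

Definition flip_perm S : {perm m.+1.-tuple bool} := perm (inv_inj (flip_lastK S)).

Lemma flip_permM S S' : (flip_perm S * flip_perm S')%g = flip_perm (symdiff S S').
Proof.
apply/permP => t; rewrite permM !permE /flip_last.
by case: (unrcons t) => u b; rewrite rcons_pairK in_symdiff addbA.
Qed.

Lemma flip_perm_involutive S : (flip_perm S * flip_perm S)%g = 1%g.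
Proof. by apply/permP => t; rewrite permM perm1 !permE flip_lastK. Qed.

Lemma mu_Fix_flip_perm (R : realType) S :
  mu (Fix (act (flip_perm S))) = 1 - #|S|%:R / 2 ^+ m :> R.
Proof.
have card_fix : #|[set t | flip_perm S t == t]| = (#|~: S| * 2)%N.
  apply: card_rcons_pair_preim => u b; rewrite permE /flip_last rcons_pairK.
  apply/eqP/idP => [/(can_inj (@rcons_pairK _))[]|/negbTE->]; last by rewrite addbF.
  by case: (u \in S); case: b.
have card_compl : #|~: S|%:R = 2 ^+ m - #|S|%:R :> R.
  have -> : 2 ^+ m = #|{: m.-tuple bool}|%:R :> R by rewrite card_tuple card_bool natrX.
  by rewrite -(cardsC S) natrD addrAC subrr add0r.
rewrite mu_Fix_act card_fix natrM card_compl exprS.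
by field; rewrite expf_neq0 // pnatr_eq0.
Qed.

Definition unit_tuple (i : 'I_m) : m.-tuple bool := [tuple j == i | j < m].

Lemma unit_tuple_inj : injective unit_tuple.
Proof.
by move=> i j /(congr1 (fun t => tnth t i)); rewrite !tnth_mktuple eqxx => /esym/eqP.
Qed.

Definition flip_units (C : {set 'I_m}) : {perm m.+1.-tuple bool} :=
  flip_perm (unit_tuple @: C).

Lemma flip_unitsM (A B : {set 'I_m}) :
  (flip_units A * flip_units B)%g = flip_units (symdiff A B).
Proof. by rewrite flip_permM -imset_symdiff //; apply: unit_tuple_inj. Qed.

Lemma mu_Fix_flip_units (R : realType) (C : {set 'I_m}) :
  mu (Fix (act (flip_units C))) = 1 - (2 ^+ m)^-1 * #|C|%:R :> R.
Proof. by rewrite mu_Fix_flip_perm (card_imset _ unit_tuple_inj) mulrC. Qed.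

End FlipLast.

Arguments flip_units {m}.

Section AlternatingSums.
Variable R : realType.

Lemma sum_signr_card (m : nat) (F : R -> R) :
  \sum_(C : {set 'I_m}) (-1) ^+ #|C| * F #|C|%:R = alt_binom_sum m F.
Proof.
rewrite (partition_big (fun C : {set 'I_m} => inord #|C| : 'I_m.+1) predT) //.
apply: eq_bigr => k _.
have card_le (C : {set 'I_m}) : (#|C| < m.+1)%N.
  by rewrite ltnS -[m in (_ <= m)%N]card_ord max_card.
rewrite (eq_bigl (mem [set C : {set 'I_m} | #|C| == k])); last first.
  by move=> C; rewrite !inE -val_eqE /= inordK.
rewrite (eq_bigr (fun _ => (-1) ^+ k * F k%:R)); last by move=> C /[!inE] /eqP->.
by rewrite sumr_const card_draws card_ord -mulrA mulr_natl.
Qed.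

Lemma sum_signr_symdiff (m : nat) (A : {set 'I_m}) (F : R -> R) :
  \sum_(B : {set 'I_m}) (-1) ^+ #|A| * F #|symdiff A B|%:R * (-1) ^+ #|B| =
  alt_binom_sum m F.
Proof.
rewrite -sum_signr_card (reindex_inj (inv_inj (symdiffK A))).
by apply: eq_bigr => B _; rewrite symdiffK mulrAC signr_card_symdiff symdiffK.
Qed.

End AlternatingSums.

Lemma is_character_psd {R : realType} {chi : (X -> X) -> R[i]} {I : finType}
    {g ginv : I -> X -> X} :
  is_character chi ->
  (forall i, [/\ S2inf (g i), S2inf (ginv i),
                 g i \o ginv i = id & ginv i \o g i = id]) ->
  forall c : I -> R[i], 0 <= \sum_i \sum_j (c i)^* * chi (g i \o ginv j) * c j.
Proof.
move=> [_ chi_psd _] g_inv c.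
have enumE (G : I -> R[i]) : \sum_(k < #|I|) G (enum_val k) = \sum_i G i.
  by symmetry; exact: big_enum_val.
have := chi_psd #|I| (g \o enum_val) (ginv \o enum_val) (fun i => g_inv _).
move=> /(_ (c \o enum_val)).
rewrite /comp; under eq_bigr do rewrite (enumE (fun j => _ * chi (_ \o ginv j) * c j)).
by rewrite (enumE (fun i => \sum_j (c i)^* * chi (g i \o ginv j) * c j)).
Qed.

Lemma chi_alpha_alt_binom_sum_ge0 {R : realType} (alpha : R) (m : nat) :
  is_character (chi_alpha alpha) ->
  0 <= alt_binom_sum m (fun x => (1 - (2 ^+ m)^-1 * x) `^ alpha).
Proof.
move=> chi_char; set F := fun x => _.
pose g (C : {set 'I_m}) := act (flip_units C).
have g_inv C : [/\ S2inf (g C), S2inf (g C), g C \o g C = id & g C \o g C = id].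
  have g_S2inf : S2inf (g C) by exists m.+1, (flip_units C).
  by rewrite /g act_comp flip_perm_involutive act1.
pose c (C : {set 'I_m}) := ((-1) ^+ #|C| : R)%:C%C.
have term A B : (c A)^* * chi_alpha alpha (g A \o g B) * c B =
    ((-1) ^+ #|A| * F #|symdiff A B|%:R * (-1) ^+ #|B|)%:C%C.
  rewrite /g act_comp flip_unitsM /chi_alpha mu_Fix_flip_units symdiffC.
  have conj_real (x : R) : (x%:C%C)^* = x%:C%C := conjc_real x.
  by rewrite /c conj_real -!rmorphM.
have := is_character_psd chi_char g_inv c.
under eq_bigr do under eq_bigr do rewrite term.
under eq_bigr do rewrite -rmorph_sum sum_signr_symdiff.
rewrite -rmorph_sum sumr_const -[0]/(0%:C%C) lecR -mulr_natr pmulr_lge0 //.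
by rewrite ltr0n; apply/card_gt0P; exists finset.set0.
Qed.

Theorem mainTheorem9 (R : realType) (alpha : R) (halpha : 0 < alpha) :
  is_character (chi_alpha alpha) -> exists k : nat, alpha = k%:R.
Proof.
move=> chi_char; apply: contrapT => alpha_notnat.
have /andP[k_le k_gt] := truncn_itv (ltW halpha); set k := Num.truncn alpha in k_le k_gt.
have k_lt : k%:R < alpha.
  by rewrite lt_neqAle k_le andbT; apply/eqP => alpha_k; apply: alpha_notnat; exists k.
have := chi_alpha_alt_binom_sum_ge0 alpha k.+2 chi_char.
apply/negP; rewrite -ltNge; apply: alt_binom_sum_powR_lt0.
- by rewrite invr_gt0 exprn_gt0.
- by rewrite invrK -natrX ltr_nat ltn_expl.
- exact: falling_lt0.
Qed.
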